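(* Suppose $L\ge 1$ and the eigenvalues $\lambda_1(\operatorname{cov}(\boldsymbol{f})),\dots,\lambda_L(\operatorname{cov}(\boldsymbol{f}))$ are distinct. Then the D-GCCA common-source vectors $\boldsymbol{c}_1,\dots,\boldsymbol{c}_K$ (defined in the context) do not depend on the (non-unique) choice of the orthonormal bases $\boldsymbol{f}_1,\dots,\boldsymbol{f}_K$ nor on the choice of the eigenvectors $\{\boldsymbol{\eta}^{(\ell)}\}_{1\le\ell\le L}$. (Note that the eigenvalues of $\operatorname{cov}(\boldsymbol f)$ themselves do not depend on the choice of the bases.)
   Context: $\mathcal{L}_0^2$ is the space of real-valued random variables with zero mean and finite variance with the covariance as inner product; $\perp$ means zero covariance, $\|x\|=\sqrt{\operatorname{var}(x)}$, $\theta(x,y)$ is the angle with $\cos\theta(x,y)=\operatorname{corr}(x,y)$, $\operatorname{corr}(x,0)=0$. $K\ge2$; $\boldsymbol{x}_k\in\mathbb{R}^{p_k}$ ($k\le K$) are random vectors with entries in $\mathcal{L}_0^2$, $r_k=\dim\operatorname{span}(\boldsymbol{x}_k^\top)\ge1$ (span of the entries), $r_f=\dim\sum_k\operatorname{span}(\boldsymbol{x}_k^\top)$. D-GCCA construction: choose $\boldsymbol{f}_k\in\mathbb{R}^{r_k}$ whose entries form an orthonormal basis of $\operatorname{span}(\boldsymbol{x}_k^\top)$, $\boldsymbol{f}=(\boldsymbol{f}_1^\top,\dots,\boldsymbol{f}_K^\top)^\top$, and orthonormal eigenvectors $\boldsymbol{\eta}^{(\ell)}=((\boldsymbol{\eta}^{(\ell)}_1)^\top,\dots,(\boldsymbol{\eta}^{(\ell)}_K)^\top)^\top$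 ($\boldsymbol\eta^{(\ell)}_k\in\mathbb{R}^{r_k}$) of $\operatorname{cov}(\boldsymbol{f})$ for its $\ell$th largest eigenvalue $\lambda_\ell(\operatorname{cov}(\boldsymbol f))$, $\ell\le r_f$. Set $w^{(\ell)}=\lambda_\ell(\operatorname{cov}(\boldsymbol f))^{-1/2}(\boldsymbol{\eta}^{(\ell)})^\top\boldsymbol{f}$, and $z_k^{(\ell)}=(\boldsymbol{\eta}_k^{(\ell)}/\|\boldsymbol{\eta}_k^{(\ell)}\|_F)^\top\boldsymbol{f}_k$ if $\boldsymbol\eta^{(\ell)}_k\ne\boldsymbol0$ and $z_k^{(\ell)}=0$ otherwise. $\alpha^{(\ell)}$ is the real number such that, with $c^{(\ell)}=\alpha^{(\ell)}w^{(\ell)}$ and $d_k^{(\ell)}=z_k^{(\ell)}-c^{(\ell)}$, $|\alpha^{(\ell)}|$ is the smallest value of $|\alpha|$ for which at least one pair $j\ne k$ has $d^{(\ell)}_j\perp d^{(\ell)}_k$, and $\alpha^{(\ell)}<0$ if there are two such values (such $\alpha^{(\ell)}$ always exists). Let $L=\max\{\ell\le r_f:\lambda_\ell(\operatorname{cov}(\boldsymbol f))>1\}$, $\mathcal{I}_0=\{\ell\le L:\alpha^{(\ell)}\neq 0\}$, $\boldsymbol{z}_k^{\mathcal{I}_0}=(z_k^{(\ell)})^\top_{\ell\in\mathcal{I}_0}$, $\boldsymbol{c}^{\mathcal{I}_0}=(c^{(\ell)})^\top_{\ell\in\mathcal{I}_0}$ (increasing order of $\ell$). The common-source vector is $\boldsymbol{c}_k=\operatorname{cov}(\boldsymbol{x}_k,\boldsymbol{z}_k^{\mathcal{I}_0})\{\operatorname{cov}(\boldsymbol{z}_k^{\mathcal{I}_0})\}^{\dagger}\boldsymbol{c}^{\mathcal{I}_0}$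 if $\mathcal{I}_0\ne\emptyset$ and $\boldsymbol{c}_k=\boldsymbol{0}$ otherwise, where $\dagger$ is the Moore–Penrose pseudoinverse and $\operatorname{cov}(\boldsymbol u,\boldsymbol v)$ is the matrix with $(i,j)$ entry $\operatorname{cov}(u_i,v_j)$. *)

(* Random variables in L^2_0 are modelled abstractly as the
   elements of a real vector space V equipped with a covariance form cov that
   is bilinear, symmetric and positive definite (L^2_0 modulo a.s. equality). *)
From HB Require Import structures.
From mathcomp Require Import all_boot all_order all_algebra.
From Stdlib Require Import ClassicalEpsilon.
Unset Printing Implicit Defensive.
Import Order.TTheory GRing.Theory Num.Theory.
Local Open Scope ring_scope.

(* length of the stacked vector f = (f_1^T, ..., f_K^T)^T *)
Definition Ntot {K : nat} (r : 'I_K -> nat) : nat := \sum_(k < K) r k.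

Section DGCCA.
Context {R : rcfType} {V : lmodType R} (cov : V -> V -> R).

Definition inner_product : Prop :=
  [/\ forall (a : R) (u v w : V), cov (a *: u + v) w = a * cov u w + cov v w,
      forall u v : V, cov u v = cov v u,
      forall u : V, 0 <= cov u u
    & forall u : V, cov u u = 0 -> u = 0].

Definition in_span {n : nat} (s : 'I_n -> V) (v : V) : Prop :=
  exists a : 'I_n -> R, v = \sum_(i < n) a i *: s i.

Context {K : nat} {p : 'I_K -> nat} (x : forall k : 'I_K, 'I_(p k) -> V).
Context {r : 'I_K -> nat}.

Definition onb_choice (f : forall k : 'I_K, 'I_(r k) -> V) : Prop :=
  forall k : 'I_K,
    [/\ forall j, in_span (x k) (f k j),
        forall i, in_span (f k) (x k i)
      & forall i j, cov (f k i) (f k j) = (i == j)%:R].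


Context (f : forall k : 'I_K, 'I_(r k) -> V).

(* eta l : the l-th eigenvector (0-based index), split into blocks eta l k;
   lam l : the corresponding eigenvalue.  A full orthonormal eigenbasis of
   cov(f) with eigenvalues listed in nonincreasing order, so that
   lam l = lambda_{l+1}(cov f). *)
Definition eig_choice (eta : 'I_(Ntot r) -> forall k : 'I_K, 'I_(r k) -> R)
  (lam : 'I_(Ntot r) -> R) : Prop :=
  [/\ forall l m : 'I_(Ntot r),
        \sum_(k < K) \sum_(i < r k) eta l k i * eta m k i = (l == m)%:R,
      forall (l : 'I_(Ntot r)) (k : 'I_K) (i : 'I_(r k)),
        \sum_(j < K) \sum_(i' < r j) cov (f k i) (f j i') * eta l j i'
          = lam l * eta l k i
    & forall l m : 'I_(Ntot r), (l <= m)%N -> lam m <= lam l].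

(* L = number of eigenvalues > 1 (= max{l : lambda_l > 1} as they are sorted) *)
Definition Lnum (lam : 'I_(Ntot r) -> R) : nat := #|[set l : 'I_(Ntot r) | 1 < lam l]|.

Context (eta : 'I_(Ntot r) -> forall k : 'I_K, 'I_(r k) -> R) (lam : 'I_(Ntot r) -> R).

Definition wvar (l : 'I_(Ntot r)) : V :=
  (Num.sqrt (lam l))^-1 *: \sum_(k < K) \sum_(i < r k) eta l k i *: f k i.

Definition eta_norm (l : 'I_(Ntot r)) (k : 'I_K) : R :=
  Num.sqrt (\sum_(i < r k) eta l k i ^+ 2).

Definition zvar (l : 'I_(Ntot r)) (k : 'I_K) : V :=
  if [exists i, eta l k i != 0]
  then (eta_norm l k)^-1 *: \sum_(i < r k) eta l k i *: f k i
  else 0.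

Definition alpha_good (l : 'I_(Ntot r)) (a : R) : Prop :=
  exists j k : 'I_K, j != k /\
    cov (zvar l j - a *: wvar l) (zvar l k - a *: wvar l) = 0.

Definition alpha_spec (l : 'I_(Ntot r)) (a : R) : Prop :=
  [/\ alpha_good l a,
      forall b, alpha_good l b -> `|a| <= `|b|
    & forall b, alpha_good l b -> `|b| = `|a| -> a <= b].

Definition alpha (l : 'I_(Ntot r)) : R :=
  epsilon (inhabits 0) (alpha_spec l).

Definition cvar (l : 'I_(Ntot r)) : V := alpha l *: wvar l.

(* I_0 = { l <= L : alpha^(l) <> 0 } (0-based indices l < L) *)
Definition I0 : {set 'I_(Ntot r)} :=
  [set l : 'I_(Ntot r) | (l < Lnum lam)%N && (alpha l != 0)].

End DGCCA.

Definition is_MP {R : rcfType} {m n : nat} (A : 'M[R]_(m, n)) (B : 'M[R]_(n, m)) : Prop :=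
  [/\ A *m B *m A = A, B *m A *m B = B,
      (A *m B)^T = A *m B & (B *m A)^T = B *m A].

Definition mp_pinv {R : rcfType} {m n : nat} (A : 'M[R]_(m, n)) : 'M[R]_(n, m) :=
  epsilon (inhabits 0) (is_MP A).

(* The common-source vector c_k (as a p_k-vector of random variables):
   c_k = cov(x_k, z_k^{I0}) {cov(z_k^{I0})}^† c^{I0}, where I0 is enumerated in
   increasing order of l (enum_val), and c_k = 0 if I0 is empty. *)
Definition dgcca_c {R : rcfType} {V : lmodType R} (cov : V -> V -> R)
  {K : nat} {p : 'I_K -> nat} (x : forall k : 'I_K, 'I_(p k) -> V)
  {r : 'I_K -> nat} (f : forall k : 'I_K, 'I_(r k) -> V)
  (eta : 'I_(Ntot r) -> forall k : 'I_K, 'I_(r k) -> R) (lam : 'I_(Ntot r) -> R)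
  {k : 'I_K} (i : 'I_(p k)) : V :=
  let S := I0 cov f eta lam in
  let e := fun a : 'I_#|S| => enum_val a in
  let z := fun l => zvar f eta l k in
  let G : 'M[R]_#|S| := \matrix_(a, b) cov (z (e a)) (z (e b)) in
  let P := mp_pinv G in
  if #|S| == 0%N then 0 else
  \sum_(a < #|S|) \sum_(b < #|S|)
     (cov (x k i) (z (e a)) * P a b) *: cvar cov f eta lam (e b).

(* Changing the orthonormal bases f_k multiplies f by a block-orthogonal matrix,
   so in the coordinates of f1 the second eigenvector choice is again an
   orthonormal eigenbasis of the same symmetric matrix cov(f1).  Two such
   eigenbases are related by an orthogonal matrix supported on pairs of equal
   eigenvalues; counting its squared entries over superlevel sets shows that the
   sorted eigenvalues agree, and since the first L eigenvalues are simple, each of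
   the first L eigenvectors is determined up to a sign s_l.  Hence w^(l), z_k^(l)
   and c^(l) are all multiplied by s_l, alpha^(l) and I_0 do not change, the Gram
   matrix cov(z_k^{I_0}) and its Moore-Penrose inverse are conjugated by the sign
   matrix diag(s_l), and the signs cancel in c_k. *)

From HB Require Import structures.
From mathcomp Require Import all_boot all_order all_algebra.
From mathcomp.algebra_tactics Require Import ring.
From Stdlib Require Import ClassicalEpsilon FunctionalExtensionality PropExtensionality.
Import Order.TTheory GRing.Theory Num.Theory.
Local Open Scope ring_scope.

Section OrthonormalFamily.
Context {R : comUnitRingType} {T : finType}.

Lemma sum_mul_delta {I : finType} (a : I -> R) (j : I) :
  \sum_i a i * (i == j)%:R = a j.
Proof.
rewrite (bigD1 j) //= eqxx mulr1 big1 ?addr0 // => i /negbTE ->.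
by rewrite mulr0.
Qed.

Lemma orthonormal_dual {n} {E : 'I_n -> T -> R} : #|T| = n ->
  (forall l m, \sum_t E l t * E m t = (l == m)%:R) ->
  forall t t', \sum_l E l t * E l t' = (t == t')%:R.
Proof.
move=> cardT HE t t'; subst n.
pose M : 'M[R]_#|T| := \matrix_(l, b) E l (enum_val b).
have enumE (F : T -> R) : \sum_t F t = \sum_(b < #|T|) F (enum_val b).
  by rewrite (reindex (@enum_val T predT)) //; apply: onW_bij; apply: enum_val_bij.
have MMt : M *m M^T = 1%:M.
  apply/matrixP => l m; rewrite !mxE -HE enumE.
  by apply: eq_bigr => b _; rewrite !mxE.
move/matrixP: (mulmx1C MMt) => /(_ (enum_rank t) (enum_rank t')).
rewrite !mxE (inj_eq enum_rank_inj) => <-.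
by apply: eq_bigr => l _; rewrite !mxE !enum_rankK.
Qed.

Context {n : nat} {E : 'I_n -> T -> R}.
Hypotheses (cardT : #|T| = n)
  (HE : forall l m, \sum_t E l t * E m t = (l == m)%:R).

Lemma orthonormal_expansion (v : T -> R) t' :
  \sum_l (\sum_t v t * E l t) * E l t' = v t'.
Proof.
under eq_bigr do rewrite mulr_suml.
rewrite exchange_big /=.
under eq_bigr do under eq_bigr do rewrite -mulrA.
under eq_bigr do rewrite -mulr_sumr (orthonormal_dual cardT HE).
exact: sum_mul_delta.
Qed.

Lemma parseval (v : T -> R) :
  \sum_t v t * v t = \sum_l (\sum_t v t * E l t) ^+ 2.
Proof.
transitivity (\sum_t \sum_l (\sum_t' v t' * E l t') * E l t * v t).
  by apply: eq_bigr => t _; rewrite -mulr_suml orthonormal_expansion.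
rewrite exchange_big /=; apply: eq_bigr => l _.
rewrite expr2 mulr_sumr; apply: eq_bigr => t _; ring.
Qed.

End OrthonormalFamily.

Section BlockVectors.
Context {R : comUnitRingType} {K : nat} {r : 'I_K -> nat}.
Local Notation bvec := (forall k : 'I_K, 'I_(r k) -> R).
Local Notation blocks := {k : 'I_K & 'I_(r k)}.

Definition bdot (a b : bvec) : R := \sum_k \sum_i a k i * b k i.

Lemma bdotC a b : bdot a b = bdot b a.
Proof. by apply: eq_bigr => k _; apply: eq_bigr => i _; rewrite mulrC. Qed.

Lemma sum_blocks (F : bvec) :
  \sum_k \sum_i F k i = \sum_(t : blocks) F (tag t) (tagged t).
Proof. exact: (sig_big_dep xpredT (fun _ _ => true)). Qed.

Lemma card_blocks : #|{: blocks}| = Ntot r.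
Proof.
rewrite -sum1_card /Ntot.
rewrite -(sig_big_dep (op := addn) xpredT (fun _ _ => true) (fun k _ => 1%N)).
by apply: eq_bigr => k _; rewrite sum1_card card_ord.
Qed.

Lemma exchange_blocks (F : forall k, 'I_(r k) -> forall j, 'I_(r j) -> R) :
  \sum_k \sum_i \sum_j \sum_i' F k i j i' = \sum_j \sum_i' \sum_k \sum_i F k i j i'.
Proof.
rewrite sum_blocks [RHS]sum_blocks.
under eq_bigr do rewrite sum_blocks.
under [RHS]eq_bigr do rewrite sum_blocks.
exact: exchange_big.
Qed.

Definition orthonormal (E : 'I_(Ntot r) -> bvec) :=
  forall l m, bdot (E l) (E m) = (l == m)%:R.

Context {E : 'I_(Ntot r) -> bvec} (HE : orthonormal E).

Let Esig l (t : blocks) := E l (tag t) (tagged t).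

Let Esig_orthonormal l m : \sum_t Esig l t * Esig m t = (l == m)%:R.
Proof. by rewrite -HE /bdot sum_blocks. Qed.

Lemma bexpansion v k i : \sum_l bdot v (E l) * E l k i = v k i.
Proof.
under eq_bigr do rewrite /bdot sum_blocks.
exact: (orthonormal_expansion card_blocks Esig_orthonormal
          (fun t => v (tag t) (tagged t)) (Tagged (fun k => 'I_(r k)) i)).
Qed.

Lemma bparseval v : bdot v v = \sum_l bdot v (E l) ^+ 2.
Proof.
under [RHS]eq_bigr do rewrite /bdot sum_blocks.
by rewrite /bdot sum_blocks (parseval card_blocks Esig_orthonormal).
Qed.

End BlockVectors.

Section NonincreasingSequences.
Context {R : realDomainType} {N : nat}.

Lemma card_ord_lt j : (j <= N)%N -> #|[set l : 'I_N | (l < j)%N]| = j.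
Proof.
move=> jN; have -> : [set l : 'I_N | (l < j)%N] = widen_ord jN @: [set: 'I_j].
  apply/setP => l; rewrite inE; apply/idP/imsetP => [lj|[a _ ->]] //=.
  by exists (Ordinal lj); rewrite ?inE //; apply: val_inj.
rewrite card_imset ?cardsT ?card_ord //.
by move=> a b /(congr1 val) /= /val_inj.
Qed.

Definition nonincreasing_seq (lam : 'I_N -> R) :=
  forall l m : 'I_N, (l <= m)%N -> lam m <= lam l.

Lemma nonincreasing_ltE {lam : 'I_N -> R} : nonincreasing_seq lam ->
  forall t i, (t < lam i) = (i < #|[set l : 'I_N | (t < lam l)%R]|)%N.
Proof.
move=> lam_dec t i; apply/idP/idP => [ti|].
  have : [set l : 'I_N | (l < i.+1)%N] \subset [set l : 'I_N | t < lam l].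
    by apply/subsetP => l; rewrite !inE ltnS => li; apply: lt_le_trans ti (lam_dec _ _ li).
  by move/subset_leq_card; rewrite card_ord_lt.
apply: contraTT; rewrite -leNgt -leqNgt => it.
have : [set l : 'I_N | t < lam l] \subset [set l : 'I_N | (l < i)%N].
  apply/subsetP => l; rewrite !inE; apply: contraTT; rewrite -leqNgt -leNgt => il.
  exact: le_trans (lam_dec _ _ il) it.
by move/subset_leq_card; rewrite card_ord_lt // ltnW.
Qed.

Lemma nonincreasing_eq_card (lam1 lam2 : 'I_N -> R) :
  nonincreasing_seq lam1 -> nonincreasing_seq lam2 ->
  (forall t, #|[set l : 'I_N | t < lam1 l]| = #|[set l : 'I_N | t < lam2 l]|) ->
  lam1 =1 lam2.
Proof.
move=> dec1 dec2 card12 i.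
have ltE t : (t < lam1 i) = (t < lam2 i).
  by rewrite (nonincreasing_ltE dec1) (nonincreasing_ltE dec2) card12.
by apply/eqP; rewrite eq_le !leNgt -ltE ltxx ltE ltxx.
Qed.

Lemma sum_sq_superlevel (c : 'I_N -> 'I_N -> R) (lam1 lam2 : 'I_N -> R) t :
  (forall m, \sum_l c m l ^+ 2 = 1) ->
  (forall m l, c m l != 0 -> lam2 m = lam1 l) ->
  \sum_(m in [set m : 'I_N | t < lam2 m]) \sum_(l in [set l : 'I_N | t < lam1 l]) c m l ^+ 2
    = #|[set m : 'I_N | t < lam2 m]|%:R.
Proof.
move=> row1 supp; rewrite -sumr_const; apply: eq_bigr => m; rewrite inE => tm.
rewrite -(row1 m) [RHS](bigID [in [set l : 'I_N | t < lam1 l]]) /=.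
rewrite [X in _ = _ + X]big1 ?addr0 // => l; rewrite inE => tl.
by apply/eqP; rewrite sqrf_eq0; apply: contraNT tl => /supp <-.
Qed.

(* Sum the entries of [c ^+ 2] over the block of both superlevel sets by rows,
   then by columns. *)
Lemma card_superlevel_eq (c : 'I_N -> 'I_N -> R) (lam1 lam2 : 'I_N -> R) t :
  (forall m, \sum_l c m l ^+ 2 = 1) -> (forall l, \sum_m c m l ^+ 2 = 1) ->
  (forall m l, c m l != 0 -> lam2 m = lam1 l) ->
  #|[set l : 'I_N | t < lam1 l]| = #|[set m : 'I_N | t < lam2 m]|.
Proof.
move=> row1 col1 supp; apply/eqP; rewrite -(eqr_nat R).
rewrite -(sum_sq_superlevel c lam1 lam2 t row1 supp).
rewrite -(sum_sq_superlevel (fun l m => c m l) lam2 lam1 t col1); last first.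
  by move=> l m /supp ->.
by rewrite exchange_big.
Qed.

End NonincreasingSequences.

Section SymmetricEigenbases.
Context {R : realDomainType} {K : nat} {r : 'I_K -> nat}.
Local Notation bvec := (forall k : 'I_K, 'I_(r k) -> R).

Definition beigen (S : forall k, 'I_(r k) -> forall j, 'I_(r j) -> R)
    (mu : R) (a : bvec) :=
  forall k i, \sum_j \sum_i' S k i j i' * a j i' = mu * a k i.

Context {S : forall k, 'I_(r k) -> forall j, 'I_(r j) -> R}.
Hypothesis S_sym : forall k i j i', S k i j i' = S j i' k i.

Lemma beigen_orthogonal {mu nu : R} {a b : bvec} :
  beigen S mu a -> beigen S nu b -> mu != nu -> bdot a b = 0.
Proof.
move=> Ha Hb mu_nu; apply/eqP; apply: contraNT mu_nu => ab_neq0.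
apply/eqP/(mulIf ab_neq0).
have mu_ab : mu * bdot a b = \sum_k \sum_i \sum_j \sum_i' S k i j i' * a j i' * b k i.
  rewrite mulr_sumr; apply: eq_bigr => k _; rewrite mulr_sumr; apply: eq_bigr => i _.
  by rewrite mulrA -Ha mulr_suml; apply: eq_bigr => j _; rewrite mulr_suml.
have nu_ab : nu * bdot a b = \sum_j \sum_i' \sum_k \sum_i S k i j i' * a j i' * b k i.
  rewrite mulr_sumr; apply: eq_bigr => j _; rewrite mulr_sumr; apply: eq_bigr => i' _.
  rewrite mulrCA -Hb mulr_sumr; apply: eq_bigr => k _; rewrite mulr_sumr.
  by apply: eq_bigr => i _; rewrite S_sym mulrCA mulrA.
by rewrite mu_ab nu_ab exchange_blocks.
Qed.

Context {E1 E2 : 'I_(Ntot r) -> bvec} {mu1 mu2 : 'I_(Ntot r) -> R}.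
Hypotheses (E1_on : orthonormal E1) (E2_on : orthonormal E2).
Hypotheses (E1_eig : forall l, beigen S (mu1 l) (E1 l))
  (E2_eig : forall l, beigen S (mu2 l) (E2 l)).
Hypotheses (mu1_dec : nonincreasing_seq mu1) (mu2_dec : nonincreasing_seq mu2).

Let c m l := bdot (E2 m) (E1 l).

Let c_support m l : c m l != 0 -> mu2 m = mu1 l.
Proof. by apply: contraNeq; rewrite /c => /(beigen_orthogonal (E2_eig m) (E1_eig l)) ->. Qed.

Let c_row m : \sum_l c m l ^+ 2 = 1.
Proof. by rewrite -(bparseval E1_on) E2_on eqxx. Qed.

Let c_col l : \sum_m c m l ^+ 2 = 1.
Proof.
under eq_bigr do rewrite /c bdotC.
by rewrite -(bparseval E2_on) E1_on eqxx.
Qed.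

Lemma eigenvalues_unique : mu1 =1 mu2.
Proof.
apply: nonincreasing_eq_card => // t.
exact: (card_superlevel_eq c mu1 mu2 t c_row c_col c_support).
Qed.

Section SimpleEigenvalue.
Context {l : 'I_(Ntot r)}.
Hypothesis mu1_simple : forall m, mu1 m = mu1 l -> m = l.

Let c_off m : m != l -> c l m = 0.
Proof.
move=> ml; apply: contraNeq ml => /c_support.
by rewrite -eigenvalues_unique => /esym /mu1_simple ->.
Qed.

Lemma bdot_simple_eigenvectors_sqr : c l l ^+ 2 = 1.
Proof.
rewrite -(c_row l) (bigD1 l) //= big1 ?addr0 // => m ml.
by rewrite c_off ?expr0n.
Qed.

Lemma simple_eigenvectorE k i : E2 l k i = c l l * E1 l k i.
Proof.
rewrite -(bexpansion E1_on (E2 l)) (bigD1 l) //= big1 ?addr0 // => m ml.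
by rewrite -/(c l m) c_off ?mul0r.
Qed.

End SimpleEigenvalue.
End SymmetricEigenbases.

Section BlockCombinations.
Context {R : comUnitRingType} {V : lmodType R} (cov : V -> V -> R).
Context {K : nat} {r : 'I_K -> nat}.
Local Notation bvec := (forall k : 'I_K, 'I_(r k) -> R).
Local Notation family := (forall k : 'I_K, 'I_(r k) -> V).

Definition gram (f : family) k i j i' := cov (f k i) (f j i').

Definition bcomb (f : family) (e : bvec) : V := \sum_k \sum_i e k i *: f k i.

Definition rebase (f g : family) (e : bvec) : bvec :=
  fun k j => \sum_i e k i * cov (g k i) (f k j).

Definition eig_sign (f1 f2 : family) (eta1 eta2 : 'I_(Ntot r) -> bvec) l :=
  bdot (rebase f1 f2 (eta2 l)) (eta1 l).

Lemma bcombZ f a e : bcomb f (fun k i => a * e k i) = a *: bcomb f e.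
Proof.
rewrite /bcomb scaler_sumr; apply: eq_bigr => k _; rewrite scaler_sumr.
by apply: eq_bigr => i _; rewrite scalerA.
Qed.

End BlockCombinations.

Section InnerProduct.
Context {R : rcfType} {V : lmodType R} {cov : V -> V -> R}.
Hypothesis Hcov : inner_product cov.

Lemma cov_sym u v : cov u v = cov v u. Proof. by case: Hcov. Qed.

Lemma covDl u v w : cov (u + v) w = cov u w + cov v w.
Proof. by case: Hcov => lin _ _ _; rewrite -[u]scale1r lin mul1r scale1r. Qed.

Lemma cov0l w : cov 0 w = 0.
Proof. by apply: (addrI (cov 0 w)); rewrite addr0 -covDl addr0. Qed.

Lemma covZl a u w : cov (a *: u) w = a * cov u w.
Proof. by case: Hcov => lin _ _ _; rewrite -[a *: u]addr0 lin cov0l addr0. Qed.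

Lemma covZr a u w : cov w (a *: u) = a * cov w u.
Proof. by rewrite cov_sym covZl cov_sym. Qed.

Lemma cov_suml (I : finType) (F : I -> V) w :
  cov (\sum_i F i) w = \sum_i cov (F i) w.
Proof. exact: (big_morph (cov^~ w) (fun u v => covDl u v w) (cov0l w)). Qed.

Lemma cov_sumr (I : finType) (F : I -> V) w :
  cov w (\sum_i F i) = \sum_i cov w (F i).
Proof. by rewrite cov_sym cov_suml; apply: eq_bigr => i _; rewrite cov_sym. Qed.

Section OrthonormalSpan.
Context {n m : nat} {s : 'I_n -> V} {t : 'I_m -> V}.
Hypothesis s_on : forall i j, cov (s i) (s j) = (i == j)%:R.

Lemma in_span_expansion {v : V} : in_span s v -> v = \sum_j cov v (s j) *: s j.
Proof.
move=> [a ->]; apply: eq_bigr => j _; congr (_ *: _).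
rewrite cov_suml -(sum_mul_delta a j); apply: eq_bigr => i _.
by rewrite covZl s_on.
Qed.

Lemma in_span_trans {v : V} : in_span t v -> (forall i, in_span s (t i)) -> in_span s v.
Proof.
move=> [a ->] ts; exists (fun j => \sum_i a i * cov (t i) (s j)).
under eq_bigr => i _ do rewrite (in_span_expansion (ts i)) scaler_sumr.
rewrite exchange_big /=; apply: eq_bigr => j _.
by rewrite scaler_suml; apply: eq_bigr => i _; rewrite scalerA.
Qed.

End OrthonormalSpan.

Context {K : nat} {p : 'I_K -> nat} {x : forall k : 'I_K, 'I_(p k) -> V}.
Context {r : 'I_K -> nat}.
Local Notation bvec := (forall k : 'I_K, 'I_(r k) -> R).
Local Notation family := (forall k : 'I_K, 'I_(r k) -> V).

Lemma cov_bcombr (f : family) (e : bvec) k i :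
  cov (f k i) (bcomb f e) = \sum_j \sum_i' gram cov f k i j i' * e j i'.
Proof.
rewrite cov_sumr; apply: eq_bigr => j _; rewrite cov_sumr.
by apply: eq_bigr => i' _; rewrite covZr mulrC.
Qed.

Lemma onb_change {f g : family} : onb_choice cov x f -> onb_choice cov x g ->
  forall k i, g k i = \sum_j cov (g k i) (f k j) *: f k j.
Proof.
move=> Hf Hg k i; case: (Hf k) => _ xf f_on; case: (Hg k) => gx _ _.
exact: (in_span_expansion f_on (in_span_trans f_on (gx i) xf)).
Qed.

Section Rebase.
Context {f g : family}.
Hypotheses (Hf : onb_choice cov x f) (Hg : onb_choice cov x g).

Lemma block_rebase e k :
  \sum_i e k i *: g k i = \sum_j rebase cov f g e k j *: f k j.
Proof.
under eq_bigr do rewrite (onb_change Hf Hg) scaler_sumr.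
rewrite exchange_big /=; apply: eq_bigr => j _.
by rewrite scaler_suml; apply: eq_bigr => i _; rewrite scalerA.
Qed.

Lemma bcomb_rebase e : bcomb g e = bcomb f (rebase cov f g e).
Proof. by apply: eq_bigr => k _; rewrite block_rebase. Qed.

Lemma block_dot_rebase a b k :
  \sum_j rebase cov f g a k j * rebase cov f g b k j = \sum_i a k i * b k i.
Proof.
have rebaseE e j : rebase cov f g e k j = cov (\sum_i e k i *: g k i) (f k j).
  by rewrite cov_suml; apply: eq_bigr => i _; rewrite covZl.
have [_ _ g_on] := Hg k.
transitivity (cov (\sum_i a k i *: g k i) (\sum_i b k i *: g k i)).
  rewrite [X in cov _ X]block_rebase cov_sumr; apply: eq_bigr => j _.
  by rewrite covZr rebaseE mulrC.
rewrite cov_suml; apply: eq_bigr => i _; rewrite covZl cov_sumr.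
under eq_bigr do rewrite covZr g_on eq_sym.
by rewrite (sum_mul_delta (b k)).
Qed.

Lemma orthonormal_rebase E :
  orthonormal E -> orthonormal (fun l => rebase cov f g (E l)).
Proof. by move=> HE l m; rewrite -HE; apply: eq_bigr => k _; apply: block_dot_rebase. Qed.

Lemma beigen_rebase mu e :
  beigen (gram cov g) mu e -> beigen (gram cov f) mu (rebase cov f g e).
Proof.
move=> He k j; rewrite -cov_bcombr -bcomb_rebase (onb_change Hg Hf) cov_suml.
rewrite /rebase mulr_sumr; apply: eq_bigr => i _.
by rewrite covZl cov_bcombr He (cov_sym (f k j)); ring.
Qed.

End Rebase.
End InnerProduct.

Section MoorePenrose.
Variable R : rcfType.

Lemma mulmx_tr_eq0 n (u : 'rV[R]_n) : u *m u^T = 0 -> u = 0.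
Proof.
move=> /matrixP /(_ 0 0); rewrite !mxE => sum_sq0.
have sq0 : forall j, true -> u 0 j * u 0 j = 0.
  apply: psumr_eq0P => [j _|]; first by rewrite -expr2 sqr_ge0.
  by rewrite -[RHS]sum_sq0; apply: eq_bigr => j _; rewrite [u^T j 0]mxE.
apply/matrixP => i j; rewrite [i]ord1 mxE.
by apply/eqP; move/eqP: (sq0 j isT); rewrite mulf_eq0 orbb.
Qed.

Lemma gram_unitmx m n (C : 'M[R]_(m, n)) : row_free C -> C *m C^T \in unitmx.
Proof.
move=> C_free; rewrite -row_free_unit; apply: inj_row_free => v vCC0.
have : (v *m C) *m (v *m C)^T = 0.
  by rewrite trmx_mul !mulmxA -(mulmxA v) vCC0 mul0mx.
by move/mulmx_tr_eq0/eqP; rewrite mulmx_free_eq0 // => /eqP.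
Qed.

Lemma is_MP_full_rank_factor m r n (C : 'M[R]_(m, r)) (F : 'M[R]_(r, n)) :
  row_free C^T -> row_free F -> exists B, is_MP (C *m F) B.
Proof.
move=> Ct_free F_free.
have FF : F *m F^T \in unitmx by apply: gram_unitmx.
have CC : C^T *m C \in unitmx by rewrite -{2}[C]trmxK; apply: gram_unitmx.
set P := invmx (F *m F^T); set Q := invmx (C^T *m C).
have PT : P^T = P by rewrite /P trmx_inv trmx_mul trmxK.
have QT : Q^T = Q by rewrite /Q trmx_inv trmx_mul trmxK.
have FP p (X : 'M_(p, r)) : X *m F *m F^T *m P = X.
  by rewrite -(mulmxA X F) -(mulmxA X) mulmxV ?mulmx1.
have QC p (X : 'M_(p, r)) : X *m Q *m C^T *m C = X.
  by rewrite -!(mulmxA X) -(mulmxA Q) mulVmx ?mulmx1.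
exists (F^T *m P *m Q *m C^T).
have AB : C *m F *m (F^T *m P *m Q *m C^T) = C *m Q *m C^T by rewrite !mulmxA FP.
have BA : F^T *m P *m Q *m C^T *m (C *m F) = F^T *m P *m F by rewrite !mulmxA QC.
split.
- by rewrite AB !mulmxA QC.
- by rewrite BA !mulmxA FP.
- by rewrite AB !trmx_mul trmxK QT mulmxA.
- by rewrite BA !trmx_mul trmxK PT mulmxA.
Qed.

Lemma is_MP_exists m n (A : 'M[R]_(m, n)) : exists B, is_MP A B.
Proof.
rewrite -(mulmx_base A); apply: is_MP_full_rank_factor; last exact: row_base_free.
by rewrite /row_free mxrank_tr; apply: col_base_full.
Qed.

Lemma is_MP_unique {m n} {A : 'M[R]_(m, n)} {B1 B2} : is_MP A B1 -> is_MP A B2 -> B1 = B2.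
Proof.
case=> [ABA1 BAB1 AB1 BA1] [ABA2 BAB2 AB2 BA2].
have B1E : B1 = B1 *m B1^T *m A^T by rewrite -mulmxA -trmx_mul AB1 mulmxA BAB1.
have AtE : A^T = A^T *m (A *m B2) by rewrite -{1}ABA2 trmx_mul AB2.
have E1 : B1 = B1 *m A *m B2 by rewrite {1}B1E AtE !mulmxA -B1E.
have B2E : B2 = A^T *m (B2^T *m B2) by rewrite mulmxA -trmx_mul BA2 BAB2.
have AtE' : A^T = B1 *m A *m A^T by rewrite -{1}ABA1 -mulmxA trmx_mul BA1.
have E2 : B2 = B1 *m A *m B2 by rewrite {1}B2E AtE' -!mulmxA -B2E mulmxA.
by rewrite E1 -E2.
Qed.

Lemma mp_pinvP {m n} (A : 'M[R]_(m, n)) : is_MP A (mp_pinv A).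
Proof. by apply: epsilon_spec; apply: is_MP_exists. Qed.

Lemma mp_pinv_orthogonal_conj m n (A : 'M[R]_(m, n)) (U : 'M[R]_m) (W : 'M[R]_n) :
  U^T *m U = 1%:M -> W^T *m W = 1%:M ->
  mp_pinv (U *m A *m W) = W^T *m mp_pinv A *m U^T.
Proof.
move=> U_orth W_orth; apply: (is_MP_unique (mp_pinvP (U *m A *m W))).
case: (mp_pinvP A); set B := mp_pinv A => ABA BAB AB BA.
have UtU p (X : 'M_(p, m)) : X *m U^T *m U = X by rewrite -mulmxA U_orth mulmx1.
have WWt p (X : 'M_(p, n)) : X *m W *m W^T = X.
  by rewrite -mulmxA (mulmx1C W_orth) mulmx1.
have ABA_l p (X : 'M_(p, m)) : X *m A *m B *m A = X *m A by rewrite -!(mulmxA X) ABA.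
have BAB_l p (X : 'M_(p, n)) : X *m B *m A *m B = X *m B by rewrite -!(mulmxA X) BAB.
split.
- by rewrite !mulmxA WWt UtU ABA_l.
- by rewrite !mulmxA UtU WWt BAB_l.
- by rewrite !mulmxA WWt -(mulmxA U A B) trmx_mul trmxK trmx_mul AB mulmxA.
- by rewrite !mulmxA UtU -(mulmxA W^T B A) trmx_mul trmx_mul BA trmxK mulmxA.
Qed.

Lemma mp_pinv_sign_conj n (s : 'I_n -> R) (G : 'M[R]_n) :
  (forall a, s a ^+ 2 = 1) ->
  mp_pinv (\matrix_(a, b) (s a * G a b * s b)) =
  \matrix_(a, b) (s a * mp_pinv G a b * s b).
Proof.
move=> s2; set D : 'M[R]_n := diag_mx (\row_a s a).
have DtD : D^T *m D = 1%:M.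
  apply/matrixP => a b; rewrite tr_diag_mx mul_diag_mx !mxE.
  by case: eqP => [->|_]; rewrite ?mulr1n -?expr2 ?s2 ?mulr0n ?mulr0.
have conjE (M : 'M[R]_n) : \matrix_(a, b) (s a * M a b * s b) = D *m M *m D.
  by apply/matrixP => a b; rewrite mul_mx_diag mul_diag_mx !mxE.
by rewrite !conjE mp_pinv_orthogonal_conj // tr_diag_mx.
Qed.

End MoorePenrose.

Lemma zvarE (R : rcfType) (V : lmodType R) K (r : 'I_K -> nat)
    (f : forall k : 'I_K, 'I_(r k) -> V) eta l k :
  zvar f eta l k = (eta_norm eta l k)^-1 *: \sum_i eta l k i *: f k i.
Proof.
rewrite /zvar; case: ifP => // /negbT eta0.
rewrite big1 ?scaler0 // => i _.
by move/existsPn/(_ i)/negPn/eqP: eta0 ->; rewrite scale0r.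
Qed.

Section SignChange.
Context {R : rcfType} {V : lmodType R} {cov : V -> V -> R}.
Hypothesis Hcov : inner_product cov.
Context {K : nat} {r : 'I_K -> nat}.
Context {f1 f2 : forall k : 'I_K, 'I_(r k) -> V}
  {eta1 eta2 : 'I_(Ntot r) -> forall k : 'I_K, 'I_(r k) -> R}
  {lam1 lam2 : 'I_(Ntot r) -> R} {l : 'I_(Ntot r)} {s : R}.
Hypotheses (s2 : s ^+ 2 = 1)
  (w_sign : wvar f2 eta2 lam2 l = s *: wvar f1 eta1 lam1 l)
  (z_sign : forall k, zvar f2 eta2 l k = s *: zvar f1 eta1 l k).

Lemma alpha_good_sign : alpha_good cov f2 eta2 lam2 l = alpha_good cov f1 eta1 lam1 l.
Proof.
apply: functional_extensionality => a; apply: propositional_extensionality.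
have covE j k : cov (zvar f2 eta2 l j - a *: wvar f2 eta2 lam2 l)
                    (zvar f2 eta2 l k - a *: wvar f2 eta2 lam2 l)
              = cov (zvar f1 eta1 l j - a *: wvar f1 eta1 lam1 l)
                    (zvar f1 eta1 l k - a *: wvar f1 eta1 lam1 l).
  rewrite w_sign !z_sign !scalerA (mulrC a) -!scalerA -!scalerBr.
  by rewrite (covZl Hcov) (covZr Hcov) mulrA -expr2 s2 mul1r.
split=> -[j [k [jk d_orth]]]; exists j, k; split=> //.
- by rewrite -covE.
- by rewrite covE.
Qed.

Lemma alpha_sign : alpha cov f2 eta2 lam2 l = alpha cov f1 eta1 lam1 l.
Proof. by rewrite /alpha /alpha_spec alpha_good_sign. Qed.

Lemma cvar_sign : cvar cov f2 eta2 lam2 l = s *: cvar cov f1 eta1 lam1 l.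
Proof. by rewrite /cvar alpha_sign w_sign !(scalerA _ _ (wvar f1 eta1 lam1 l)) mulrC. Qed.

End SignChange.

Lemma dgcca_c_sign_invariant {R : rcfType} {V : lmodType R} {cov : V -> V -> R}
    (Hcov : inner_product cov) {K} {p : 'I_K -> nat} {x : forall k, 'I_(p k) -> V}
    {r : 'I_K -> nat} {f1 f2 : forall k : 'I_K, 'I_(r k) -> V}
    {eta1 eta2 : 'I_(Ntot r) -> forall k : 'I_K, 'I_(r k) -> R}
    {lam1 lam2 : 'I_(Ntot r) -> R} (s : 'I_(Ntot r) -> R) :
  let S := I0 cov f1 eta1 lam1 in
  I0 cov f2 eta2 lam2 = S ->
  (forall l, l \in S -> s l ^+ 2 = 1) ->
  (forall l k, l \in S -> zvar f2 eta2 l k = s l *: zvar f1 eta1 l k) ->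
  (forall l, l \in S -> cvar cov f2 eta2 lam2 l = s l *: cvar cov f1 eta1 lam1 l) ->
  forall k (i : 'I_(p k)), dgcca_c cov x f1 eta1 lam1 i = dgcca_c cov x f2 eta2 lam2 i.
Proof.
move=> S I0E s2 z_sign c_sign k i; rewrite /dgcca_c /= I0E -/S.
case: ifP => // _; set e := fun a : 'I_#|S| => enum_val a.
have inS a : e a \in S by apply: enum_valP.
set G := \matrix_(a, b) cov (zvar f1 eta1 (e a) k) (zvar f1 eta1 (e b) k).
have -> : \matrix_(a, b) cov (zvar f2 eta2 (e a) k) (zvar f2 eta2 (e b) k)
          = \matrix_(a, b) (s (e a) * G a b * s (e b)).
  apply/matrixP => a b; rewrite !mxE !z_sign //.
  by rewrite (covZl Hcov) (covZr Hcov) (mulrC (s (e b))) mulrA.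
rewrite mp_pinv_sign_conj => [|a]; last exact: s2.
apply: eq_bigr => a _; apply: eq_bigr => b _.
rewrite mxE z_sign // c_sign // (covZr Hcov) scalerA; congr (_ *: _).
transitivity (cov (x k i) (zvar f1 eta1 (e a) k) * mp_pinv G a b
                * (s (e a) ^+ 2 * s (e b) ^+ 2)); first by rewrite !s2 // !mulr1.
by rewrite !expr2; ring.
Qed.

Section BasisIndependence.
Context {R : rcfType} {V : lmodType R} {cov : V -> V -> R}.
Hypothesis Hcov : inner_product cov.
Context {K : nat} {p : 'I_K -> nat} {x : forall k : 'I_K, 'I_(p k) -> V}.
Context {r : 'I_K -> nat}.
Context {f1 f2 : forall k : 'I_K, 'I_(r k) -> V}
  {eta1 eta2 : 'I_(Ntot r) -> forall k : 'I_K, 'I_(r k) -> R}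
  {lam1 lam2 : 'I_(Ntot r) -> R}.
Hypotheses (Hf1 : onb_choice cov x f1) (Hf2 : onb_choice cov x f2)
  (He1 : eig_choice cov f1 eta1 lam1) (He2 : eig_choice cov f2 eta2 lam2).
Hypothesis Hdist : forall l m : 'I_(Ntot r), (l < Lnum lam1)%N -> (m < Lnum lam1)%N ->
  l != m -> lam1 l != lam1 m.

Let eta2' l := rebase cov f1 f2 (eta2 l).

Let gram_sym k i j i' : gram cov f1 k i j i' = gram cov f1 j i' k i.
Proof. exact: cov_sym. Qed.

Let on1 : orthonormal eta1. Proof. by case: He1. Qed.
Let eig1 l : beigen (gram cov f1) (lam1 l) (eta1 l).
Proof. by case: He1 => _ eig _; apply: eig. Qed.
Let dec1 : nonincreasing_seq lam1. Proof. by case: He1. Qed.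
Let dec2 : nonincreasing_seq lam2. Proof. by case: He2. Qed.

Let on2' : orthonormal eta2'.
Proof. by apply: (orthonormal_rebase Hcov Hf1 Hf2); case: He2. Qed.

Let eig2' l : beigen (gram cov f1) (lam2 l) (eta2' l).
Proof. by apply: (beigen_rebase Hcov Hf1 Hf2); case: He2 => _ eig _; apply: eig. Qed.

Lemma eig_choice_lam_eq : lam1 =1 lam2.
Proof. exact: (eigenvalues_unique gram_sym on1 on2' eig1 eig2'). Qed.

Lemma eig_choice_Lnum_eq : Lnum lam2 = Lnum lam1.
Proof. by apply: eq_card => l; rewrite !inE eig_choice_lam_eq. Qed.

Section TopEigenvectors.
Context {l : 'I_(Ntot r)}.
Hypothesis lL : (l < Lnum lam1)%N.

(* The first L eigenvalues are pairwise distinct and exceed 1 >= all others. *)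
Let lam1_simple m : lam1 m = lam1 l -> m = l.
Proof.
have gt1 j : (1 < lam1 j) = (j < Lnum lam1)%N := nonincreasing_ltE dec1 1 j.
move=> lam_ml; case: (ltnP m (Lnum lam1)) => mL.
  by apply/eqP; move/eqP: lam_ml; apply: contraTT; apply: Hdist.
by move: lL; rewrite -gt1 -lam_ml gt1 ltnNge mL.
Qed.

Lemma eig_sign_sqr : eig_sign cov f1 f2 eta1 eta2 l ^+ 2 = 1.
Proof.
exact: (bdot_simple_eigenvectors_sqr gram_sym on1 on2' eig1 eig2' dec1 dec2 lam1_simple).
Qed.

Let eta2'E : eta2' l = fun k i => eig_sign cov f1 f2 eta1 eta2 l * eta1 l k i.
Proof.
apply: functional_extensionality_dep => k; apply: functional_extensionality => i.
exact: (simple_eigenvectorE gram_sym on1 on2' eig1 eig2' dec1 dec2 lam1_simple).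
Qed.

Lemma wvar_sign :
  wvar f2 eta2 lam2 l = eig_sign cov f1 f2 eta1 eta2 l *: wvar f1 eta1 lam1 l.
Proof.
rewrite /wvar -eig_choice_lam_eq -/(bcomb f2 _) -/(bcomb f1 _).
by rewrite (bcomb_rebase Hcov Hf1 Hf2) -/(eta2' l) eta2'E bcombZ scalerA mulrC -scalerA.
Qed.

Lemma zvar_sign k :
  zvar f2 eta2 l k = eig_sign cov f1 f2 eta1 eta2 l *: zvar f1 eta1 l k.
Proof.
have block2E : \sum_i eta2 l k i *: f2 k i
               = eig_sign cov f1 f2 eta1 eta2 l *: \sum_i eta1 l k i *: f1 k i.
  rewrite (block_rebase Hcov Hf1 Hf2) -/(eta2' l) eta2'E scaler_sumr.
  by apply: eq_bigr => i _; rewrite scalerA.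
have norm2E : eta_norm eta2 l k = eta_norm eta1 l k.
  congr Num.sqrt; under eq_bigr do rewrite expr2.
  rewrite -(block_dot_rebase Hcov Hf1 Hf2) -/(eta2' l) eta2'E.
  rewrite -[RHS]mul1r -eig_sign_sqr mulr_sumr.
  by apply: eq_bigr => i _; rewrite !expr2 mulrACA.
by rewrite !zvarE norm2E block2E scalerA mulrC -scalerA.
Qed.

Lemma cvar_eig_sign :
  cvar cov f2 eta2 lam2 l = eig_sign cov f1 f2 eta1 eta2 l *: cvar cov f1 eta1 lam1 l.
Proof. exact: (cvar_sign Hcov eig_sign_sqr wvar_sign zvar_sign). Qed.

Lemma alpha_eig_sign : alpha cov f2 eta2 lam2 l = alpha cov f1 eta1 lam1 l.
Proof. exact: (alpha_sign Hcov eig_sign_sqr wvar_sign zvar_sign). Qed.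

End TopEigenvectors.

Lemma I0_basis_invariant : I0 cov f2 eta2 lam2 = I0 cov f1 eta1 lam1.
Proof.
apply/setP => l; rewrite !inE eig_choice_Lnum_eq.
by case: (ltnP l (Lnum lam1)) => lL //=; rewrite alpha_eig_sign.
Qed.

End BasisIndependence.

Theorem theorem4 (R : rcfType) (V : lmodType R) (cov : V -> V -> R)
  (Hcov : inner_product cov)
  (K : nat) (HK : (2 <= K)%N)
  (p : 'I_K -> nat) (x : forall k : 'I_K, 'I_(p k) -> V)
  (r : 'I_K -> nat) (Hr : forall k, (0 < r k)%N)
  (f1 f2 : forall k : 'I_K, 'I_(r k) -> V)
  (Hf1 : onb_choice cov x f1) (Hf2 : onb_choice cov x f2)
  (eta1 eta2 : 'I_(Ntot r) -> forall k : 'I_K, 'I_(r k) -> R)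
  (lam1 lam2 : 'I_(Ntot r) -> R)
  (He1 : eig_choice cov f1 eta1 lam1) (He2 : eig_choice cov f2 eta2 lam2)
  (HL : (1 <= Lnum lam1)%N)
  (Hdist : forall l m : 'I_(Ntot r), (l < Lnum lam1)%N -> (m < Lnum lam1)%N ->
             l != m -> lam1 l != lam1 m) :
  forall (k : 'I_K) (i : 'I_(p k)),
    dgcca_c cov x f1 eta1 lam1 i = dgcca_c cov x f2 eta2 lam2 i.
Proof.
have lL l : l \in I0 cov f1 eta1 lam1 -> (l < Lnum lam1)%N.
  by rewrite inE => /andP[].
apply: (dgcca_c_sign_invariant Hcov (eig_sign cov f1 f2 eta1 eta2)).
- exact: (I0_basis_invariant Hcov Hf1 Hf2 He1 He2 Hdist).
- by move=> l /lL; apply: (eig_sign_sqr Hcov Hf1 Hf2 He1 He2 Hdist).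
- by move=> l k /lL lL'; apply: (zvar_sign Hcov Hf1 Hf2 He1 He2 Hdist lL').
- by move=> l /lL; apply: (cvar_eig_sign Hcov Hf1 Hf2 He1 He2 Hdist).
Qed.
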